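(* A finite graph $G$ is isomorphic to $\mathrm{SG}^+(P,W)$ for some finite point sets $P,W$ in the plane such that no two distinct points of $P\cup W$ have equal $x$-coordinate or equal $y$-coordinate, if and only if $G$ is a permutation graph. Moreover, every such square graph is isomorphic to $\mathrm{SG}^+(P',W')$ for some such sets with $|W'|\le 1$.
   Context: For finite point sets $P$ (vertices) and $W$ (witnesses) in $\mathbb{R}^2$ (which may share points), the square graph $\mathrm{SG}^+(P,W)$ is the graph with vertex set $P$ in which distinct $x,y\in P$ are adjacent if and only if there is an axis-aligned square with $x$ and $y$ on its boundary whose interior contains at least one point of $W$. A point $a$ dominates $b$ if $x(a)\ge x(b)$ and $y(a)\ge y(b)$. A graph $G$ is a permutation graph if there exist a finite set $S\subset\mathbb{R}^2$ with pairwise distinct $x$-coordinates and pairwise distinct $y$-coordinates and a bijection $f:V(G)\to S$ such that distinct $u,v$ are adjacent iff one of $f(u),f(v)$ dominates the other (equivalently, $G$ is the comparability graph of a partial order of dimension at most $2$). *)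

From mathcomp Require Import all_boot.
From Stdlib Require Import Reals List.
Set Implicit Arguments.
Unset Strict Implicit.
Open Scope R_scope.

Definition pt := (R * R)%type.

Definition dominates (a b : pt) : Prop := fst b <= fst a /\ snd b <= snd a.

Definition on_sq_boundary (a b s : R) (p : pt) : Prop :=
  a <= fst p <= a + s /\ b <= snd p <= b + s /\
  (fst p = a \/ fst p = a + s \/ snd p = b \/ snd p = b + s).

Definition in_sq_interior (a b s : R) (w : pt) : Prop :=
  a < fst w < a + s /\ b < snd w < b + s.

Definition sq_adj (W : list pt) (x y : pt) : Prop :=
  exists a b s : R, 0 < s /\ on_sq_boundary a b s x /\ on_sq_boundary a b s y /\
    exists w, In w W /\ in_sq_interior a b s w.

Definition general_position (L : list pt) : Prop :=
  forall u v, In u L -> In v L -> u <> v -> fst u <> fst v /\ snd u <> snd v.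

(* G is isomorphic to SG^+(P,W) where P is the image of the injective map f,
   and P u W is in general position *)
Definition square_graph_rep {T : finType} (G : rel T) (f : T -> pt) (W : list pt) : Prop :=
  injective f /\
  general_position (List.map f (enum T) ++ W) /\
  (forall u v : T, u <> v -> (G u v <-> sq_adj W (f u) (f v))).

Definition permutation_graph {T : finType} (G : rel T) : Prop :=
  exists f : T -> pt,
    (forall u v : T, u <> v -> fst (f u) <> fst (f v) /\ snd (f u) <> snd (f v)) /\
    (forall u v : T, u <> v -> (G u v <-> dominates (f u) (f v) \/ dominates (f v) (f u))).

(* Two vertices x, y are nonadjacent in SG+(P,W) iff every witness w lies "beyond" them:
   if x is dominated by y, w is weakly below-left of x or weakly above-right of y; if x is
   left-above y, the same holds for the anti-diagonal order.  Hence nonadjacent vertices are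
   comparable, for the same order, with every witness.  Among the vertices comparable in
   dominance with all witnesses, two are nonadjacent iff they are comparable and no witness
   lies strictly between them.  Sorting these vertices into levels by the number of
   witnesses below them, drawing the levels as boxes along the anti-diagonal and a vertex
   that is itself a witness as a hinge point alternately below and above two consecutive
   boxes, turns non-adjacency into dominance comparability.  The anti-diagonal vertices are
   handled the same way after the reflection y |-> -y, and the remaining vertices are placed
   far away.  Reflecting once more turns comparability into the dominance relation of a
   permutation model.  Conversely, a permutation model squeezed into the open second
   quadrant, with the origin as the only witness, is a square graph: two such points span a
   square around the origin iff they are comparable. *)

From mathcomp Require Import all_boot.
From Stdlib Require Import Reals List.
From mathcomp Require Import zify.
From Stdlib Require Import Lra ClassicalEpsilon Classical.
From Stdlib Require FinFun.
Open Scope R_scope.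
Set Implicit Arguments.
Unset Strict Implicit.

Definition lt_dom (a b : pt) : Prop := fst a < fst b /\ snd a < snd b.
Definition lt_anti (a b : pt) : Prop := fst a < fst b /\ snd b < snd a.
Definition apart (a b : pt) : Prop := fst a <> fst b /\ snd a <> snd b.
Definition dom_comparable (a b : pt) : Prop := lt_dom a b \/ lt_dom b a.
Definition anti_comparable (a b : pt) : Prop := lt_anti a b \/ lt_anti b a.

Lemma lt_dom_trans a b c : lt_dom a b -> lt_dom b c -> lt_dom a c.
Proof. rewrite /lt_dom; lra. Qed.
Lemma lt_dom_irrefl a : ~ lt_dom a a.
Proof. rewrite /lt_dom; lra. Qed.
Lemma lt_dom_asym a b : lt_dom a b -> ~ lt_dom b a.
Proof. rewrite /lt_dom; lra. Qed.
Lemma lt_anti_trans a b c : lt_anti a b -> lt_anti b c -> lt_anti a c.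
Proof. rewrite /lt_anti; lra. Qed.
Lemma lt_anti_irrefl a : ~ lt_anti a a.
Proof. rewrite /lt_anti; lra. Qed.
Lemma lt_anti_asym a b : lt_anti a b -> ~ lt_anti b a.
Proof. rewrite /lt_anti; lra. Qed.
Lemma lt_dom_not_anti a b : lt_dom a b -> ~ anti_comparable a b.
Proof. rewrite /lt_dom /anti_comparable /lt_anti; lra. Qed.

Lemma apart_sym a b : apart a b -> apart b a.
Proof. by case=> h1 h2; split=> e; [apply: h1 | apply: h2]. Qed.
Lemma anti_comparable_sym a b : anti_comparable a b -> anti_comparable b a.
Proof. rewrite /anti_comparable; tauto. Qed.
Lemma dom_comparable_sym a b : dom_comparable a b -> dom_comparable b a.
Proof. rewrite /dom_comparable; tauto. Qed.

Lemma orientation x y : apart x y ->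
  lt_dom x y \/ lt_dom y x \/ lt_anti x y \/ lt_anti y x.
Proof.
  case: x y => [x1 x2] [y1 y2]; rewrite /apart /lt_dom /lt_anti /= => -[h1 h2].
  by case: (Rtotal_order x1 y1) => [|[|]]; case: (Rtotal_order x2 y2) => [|[|]]; tauto.
Qed.

(** * Squares through two points *)

Definition square_witness (w x y : pt) : Prop :=
  exists a b s : R, 0 < s /\ on_sq_boundary a b s x /\ on_sq_boundary a b s y /\
    in_sq_interior a b s w.

Definition outside (r : pt -> pt -> Prop) (w x y : pt) : Prop := r x y /\ (r w x \/ r y w).

(* For points in general position, [beyond w x y] holds exactly when no square with [x] and
   [y] on its boundary has [w] in its interior (lemma [square_witnessE]). *)
Definition beyond (w x y : pt) : Prop :=
  w = x \/ w = y \/ outside lt_dom w x y \/ outside lt_dom w y x \/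
  outside lt_anti w x y \/ outside lt_anti w y x.

Lemma beyond_sym w x y : beyond w x y -> beyond w y x.
Proof. rewrite /beyond; tauto. Qed.

Lemma beyond_dom w x y : lt_dom x y ->
  beyond w x y <-> w = x \/ w = y \/ lt_dom w x \/ lt_dom y w.
Proof.
  move=> l; have := lt_dom_asym l; have := lt_dom_not_anti l.
  rewrite /beyond /outside /anti_comparable; tauto.
Qed.

Lemma beyond_anti w x y : lt_anti x y ->
  beyond w x y <-> w = x \/ w = y \/ lt_anti w x \/ lt_anti y w.
Proof.
  move=> l; have := lt_anti_asym l.
  have : ~ lt_dom x y /\ ~ lt_dom y x by move: l; rewrite /lt_dom /lt_anti; lra.
  rewrite /beyond /outside; tauto.
Qed.

Lemma square_witness_sym w x y : square_witness w x y -> square_witness w y x.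
Proof. by case=> a [b [s [? [? [? ?]]]]]; exists a, b, s. Qed.

Lemma square_witness_not_beyond w x y : square_witness w x y -> ~ beyond w x y.
Proof.
  case: x y w => [x1 x2] [y1 y2] [w1 w2] [a [b [s [_ [hx [hy hw]]]]]].
  move: hx hy hw; rewrite /on_sq_boundary /in_sq_interior /beyond /outside /lt_dom /lt_anti /=.
  move=> [? [? ?]] [? [? ?]] [? ?] [[= ? ?]|[[= ? ?]|?]]; lra.
Qed.

(* Either [x1 < w1] and [w2 < y2], and the square with [x] on its left side and [y] on its
   top side works, or [w1 < y1] and [x2 < w2], and the one with [x] on its bottom side and
   [y] on its right side does; [s] is taken large enough to contain [w]. *)
Lemma square_witness_dom w x y : apart w x -> apart w y -> lt_dom x y ->
  ~ beyond w x y -> square_witness w x y.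
Proof.
  move=> gx gy l; rewrite (beyond_dom w l).
  case: x y w l gx gy => [x1 x2] [y1 y2] [w1 w2].
  rewrite /apart /lt_dom /square_witness /on_sq_boundary /in_sq_interior /=.
  move=> [l1 l2] [g1 g2] [g3 g4] hN.
  have [[h1 h2]|[h1 h2]] : (x1 < w1 /\ w2 < y2) \/ (w1 < y1 /\ x2 < w2).
  { case: (Rtotal_order w1 x1) => [a|[a|a]]; [|lra|];
    case: (Rtotal_order w2 x2) => [b|[b|b]]; try lra;
    case: (Rtotal_order w1 y1) => [c|[c|c]]; try lra;
    case: (Rtotal_order w2 y2) => [d|[d|d]]; lra. }
  - set s := (y1 - x1) + (y2 - x2) + (w1 - x1) + (y2 - w2).
    by exists x1, (y2 - s), s; rewrite /s; repeat split; lra.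
  - set s := (y1 - x1) + (y2 - x2) + (y1 - w1) + (w2 - x2).
    by exists (y1 - s), x2, s; rewrite /s; repeat split; lra.
Qed.

Lemma square_witness_anti w x y : apart w x -> apart w y -> lt_anti x y ->
  ~ beyond w x y -> square_witness w x y.
Proof.
  move=> gx gy l; rewrite (beyond_anti w l).
  case: x y w l gx gy => [x1 x2] [y1 y2] [w1 w2].
  rewrite /apart /lt_anti /square_witness /on_sq_boundary /in_sq_interior /=.
  move=> [l1 l2] [g1 g2] [g3 g4] hN.
  have [[h1 h2]|[h1 h2]] : (x1 < w1 /\ y2 < w2) \/ (w1 < y1 /\ w2 < x2).
  { case: (Rtotal_order w1 x1) => [a|[a|a]]; [|lra|];
    case: (Rtotal_order w2 x2) => [b|[b|b]]; try lra;
    case: (Rtotal_order w1 y1) => [c|[c|c]]; try lra;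
    case: (Rtotal_order w2 y2) => [d|[d|d]]; lra. }
  - set s := (y1 - x1) + (x2 - y2) + (w1 - x1) + (w2 - y2).
    by exists x1, y2, s; rewrite /s; repeat split; lra.
  - set s := (y1 - x1) + (x2 - y2) + (y1 - w1) + (x2 - w2).
    by exists (y1 - s), (x2 - s), s; rewrite /s; repeat split; lra.
Qed.

Lemma square_witnessE w x y : apart x y -> (w = x \/ apart w x) -> (w = y \/ apart w y) ->
  square_witness w x y <-> ~ beyond w x y.
Proof.
  move=> hxy hx hy; split; first exact: square_witness_not_beyond.
  move=> hN; have {}hx : apart w x by case: hx => // e; case: hN; left.
  have {}hy : apart w y by case: hy => // e; case: hN; right; left.
  case: (orientation hxy) => [l|[l|[l|l]]].
  - exact: square_witness_dom.
  - by apply/square_witness_sym/square_witness_dom => // /beyond_sym.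
  - exact: square_witness_anti.
  - by apply/square_witness_sym/square_witness_anti => // /beyond_sym.
Qed.

Lemma sq_adjE W x y : apart x y ->
  (forall w, In w W -> (w = x \/ apart w x) /\ (w = y \/ apart w y)) ->
  sq_adj W x y <-> exists2 w, In w W & ~ beyond w x y.
Proof.
  move=> hxy hW; split.
  - case=> a [b [s [hs [hx [hy [w [hw hi]]]]]]].
    by exists w => //; apply: square_witness_not_beyond; exists a, b, s.
  - case=> w hw; have [hwx hwy] := hW w hw.
    case/(square_witnessE hxy hwx hwy) => a [b [s [? [? [? ?]]]]].
    by exists a, b, s; do 3 (split => //); exists w.
Qed.

Definition asbool (P : Prop) : bool := if excluded_middle_informative P then true else false.

Lemma asboolP (P : Prop) : reflect P (asbool P).
Proof. by rewrite /asbool; case: excluded_middle_informative => h; constructor. Qed.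

Definition countp (A : Type) (l : list A) (P : A -> Prop) : nat := count (fun x => asbool (P x)) l.

Section CountP.
Variable A : Type.

Lemma countp_ext (l : list A) (P Q : A -> Prop) :
  (forall x, In x l -> P x <-> Q x) -> countp l P = countp l Q.
Proof.
  rewrite /countp; elim: l => //= a l IH h.
  rewrite IH => [|x hx]; last by apply: h; right.
  by have := h a (or_introl erefl); do 2 case: asboolP => //=; tauto.
Qed.

Lemma countp_split (l : list A) (P Q : A -> Prop) : (forall x, In x l -> P x -> Q x) ->
  countp l Q = (countp l P + countp l (fun x => Q x /\ ~ P x))%nat.
Proof.
  rewrite /countp; elim: l => //= a l IH h.
  rewrite IH => [|x hx]; last by apply: h; right.
  have := h a (or_introl erefl); do 3 case: asboolP => //=; try tauto; lia.
Qed.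

Lemma countp_eq0 (l : list A) (P : A -> Prop) :
  countp l P = 0%nat <-> (forall x, In x l -> ~ P x).
Proof.
  rewrite /countp; elim: l => [|a l IH] /=; first by split.
  case: asboolP => ha; first by split=> // /(_ a (or_introl erefl)).
  rewrite add0n IH; split=> [h x [<-|hx]|h x hx]; by [|apply: h | apply: h; right].
Qed.

Lemma countp_eq1 (l : list A) (a : A) : NoDup l -> In a l -> countp l (eq^~ a) = 1%nat.
Proof.
  rewrite /countp; elim: l => //= b l IH /NoDup_cons_iff [bl ul] ha.
  case: asboolP => [eba|neba].
  - rewrite -eba in ha *; move: (proj2 (countp_eq0 l (eq^~ b))); rewrite /countp => -> //.
    by move=> x hx exb; apply: bl; rewrite -exb.
  - by rewrite IH //; case: ha => // eba; case: neba.
Qed.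
End CountP.

Definition squash (t : R) : R := (1 + t / (1 + Rabs t)) / 2.

Lemma squash_bounds t : 0 < squash t < 1.
Proof.
  have hpos : 0 < 1 + Rabs t by have := Rabs_pos t; lra.
  have : -1 < t / (1 + Rabs t) < 1.
  { split; apply: (Rmult_lt_reg_r (1 + Rabs t)) => //;
    rewrite /Rdiv Rmult_assoc Rinv_l; try lra;
    (case: (Rcase_abs t) => h; [rewrite Rabs_left | rewrite Rabs_right]); lra. }
  rewrite /squash; lra.
Qed.

Lemma squash_lt a b : a < b -> squash a < squash b.
Proof.
  move=> h; rewrite /squash.
  have Ha : 0 < 1 + Rabs a by have := Rabs_pos a; lra.
  have Hb : 0 < 1 + Rabs b by have := Rabs_pos b; lra.
  suff : a / (1 + Rabs a) < b / (1 + Rabs b) by lra.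
  apply: (Rmult_lt_reg_r ((1 + Rabs a) * (1 + Rabs b))); first nra.
  have -> : a / (1 + Rabs a) * ((1 + Rabs a) * (1 + Rabs b)) = a * (1 + Rabs b) by field; lra.
  have -> : b / (1 + Rabs b) * ((1 + Rabs a) * (1 + Rabs b)) = b * (1 + Rabs a) by field; lra.
  (case: (Rcase_abs a) => h1; [rewrite (Rabs_left a) | rewrite (Rabs_right a)]) => //;
  (case: (Rcase_abs b) => h2; [rewrite (Rabs_left b) | rewrite (Rabs_right b)]) => //; nra.
Qed.

Lemma squash_lt_iff a b : squash a < squash b <-> a < b.
Proof.
  split; last exact: squash_lt.
  case: (Rtotal_order a b) => [//|[->|/squash_lt]]; lra.
Qed.

Lemma squash_neq a b : a <> b -> squash a <> squash b.
Proof. by case: (Rtotal_order a b) => [/squash_lt|[//|/squash_lt]]; lra. Qed.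

Definition in_unit (q : pt) : Prop := 0 < fst q < 1 /\ 0 < snd q < 1.
Definition sq (a : pt) : pt := (squash (fst a), squash (snd a)).

Lemma in_unit_sq a : in_unit (sq a).
Proof. by split; apply: squash_bounds. Qed.

Lemma lt_dom_sq a b : lt_dom (sq a) (sq b) <-> lt_dom a b.
Proof. by rewrite /lt_dom /= !squash_lt_iff. Qed.

Lemma apart_sq a b : apart a b -> apart (sq a) (sq b).
Proof. by case=> h1 h2; split; apply: squash_neq. Qed.

Definition encodes (N : Prop) (a b : pt) : Prop := (N <-> dom_comparable a b) /\ apart a b.

Lemma encodes_sym (N N' : Prop) a b : (N <-> N') -> encodes N a b -> encodes N' b a.
Proof.
  move=> e [h g]; split; last exact: apart_sym.
  by rewrite -e h; split; apply: dom_comparable_sym.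
Qed.

Lemma INR_ltn m n : (m < n)%nat -> INR m + 1 <= INR n.
Proof. by move/leP => h; rewrite -S_INR; apply: le_INR. Qed.

Ltac solve_encodes :=
  rewrite /encodes /dom_comparable /lt_dom /apart /=;
  split; [split; [move=> ?; first [exfalso; lia | left; split; lra | right; split; lra]
                 | move=> [[? ?]|[? ?]]; first [lia | exfalso; lra]]
         | split; move=> ?; lra].

(** * Levels drawn as boxes *)

Definition box (h : nat) (q : pt) : pt := (3 * INR h + fst q, - (3 * INR h) + snd q).

(* The point of a shared vertex between levels [j] and [j+1]: below-left of both boxes
   when [j] is even and above-right of both when [j] is odd, so that the points of
   consecutive levels are comparable while all others are not. *)
Definition hinge (j : nat) : pt :=
  if odd j then (3 * INR j + 4, - (3 * INR j) + 1) else (3 * INR j, - (3 * INR j) - 3).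

Lemma box_box i j q q' : in_unit q -> in_unit q' -> i <> j \/ apart q q' ->
  encodes (i = j /\ dom_comparable q q') (box i q) (box j q').
Proof.
  move: q q' => [q1 q2] [q1' q2'] [/= ? ?] [/= ? ?] hij.
  case: (ltngtP i j) => [lt_ij|lt_ji|eij];
    rewrite /encodes /dom_comparable /lt_dom /apart /box /=.
  - have := INR_ltn lt_ij; split; [split=> [[?]|[[? ?]|[? ?]]] | split=> ?]; [lia | lra ..].
  - have := INR_ltn lt_ji; split; [split=> [[?]|[[? ?]|[? ?]]] | split=> ?]; [lia | lra ..].
  - subst j; case: hij => [/(_ erefl) //|[/= n1 n2]].
    split; last by split=> e; [apply: n1 | apply: n2]; lra.
    split=> [[_ [[? ?]|[? ?]]]|[[? ?]|[? ?]]]; [left|right|split=> //; left|split=> //; right];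
      split; lra.
Qed.

Lemma hinge_box j h q : in_unit q -> encodes (h = j \/ h = j.+1) (hinge j) (box h q).
Proof.
  move: q => [q1 q2] [/= ? ?]; rewrite /hinge /box /=.
  have [lt_hj|[->|[->|lt_jh]]] : (h < j)%nat \/ h = j \/ h = j.+1 \/ (j.+1 < h)%nat by lia.
  - have lvl := INR_ltn lt_hj; case: (odd j); solve_encodes.
  - case: (odd j); solve_encodes.
  - rewrite S_INR; case: (odd j); solve_encodes.
  - have lvl := INR_ltn lt_jh; rewrite S_INR in lvl; case: (odd j); solve_encodes.
Qed.

Lemma hinge_hinge i j : (i < j)%nat -> encodes (j = i.+1) (hinge i) (hinge j).
Proof.
  rewrite /hinge => lt_ij.
  have [->|lt_Sij] : j = i.+1 \/ (i.+1 < j)%nat by lia.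
  - rewrite S_INR /=; case: (odd i); solve_encodes.
  - have lvl := INR_ltn lt_Sij; rewrite S_INR in lvl.
    case: (odd i); case: (odd j); solve_encodes.
Qed.

(** * Levels of a configuration *)

Section Levels.
Variables (T : finType) (p : T -> pt) (W : list pt).
Hypothesis apart_p : forall u v, u <> v -> apart (p u) (p v).
Hypothesis uniq_W : NoDup W.

Definition nonadj (u v : T) : Prop := forall w, In w W -> beyond w (p u) (p v).
Definition dom_class (u : T) : Prop := forall w, In w W -> w = p u \/ dom_comparable w (p u).
Definition anti_class (u : T) : Prop := forall w, In w W -> w = p u \/ anti_comparable w (p u).
Definition shared (u : T) : Prop := In (p u) W.
Definition lo (u : T) : nat := countp W (fun w => lt_dom w (p u)).
Definition hi (u : T) : nat := countp W (fun w => w = p u \/ lt_dom w (p u)).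

Lemma nonadj_sym u v : nonadj u v -> nonadj v u.
Proof. by move=> h w /h /beyond_sym. Qed.

Lemma hi_lo u : hi u = (lo u + countp W (eq^~ (p u)))%nat.
Proof.
  rewrite /hi /lo (countp_split (P := fun w => lt_dom w (p u))) => [|w _]; last by right.
  congr (_ + _)%nat; apply: countp_ext => w _.
  split=> [[[//|? //]]|->]; split; [by left | exact: lt_dom_irrefl].
Qed.

Lemma hi_shared u : shared u -> hi u = (lo u).+1.
Proof. by move=> su; rewrite hi_lo countp_eq1 // addn1. Qed.

Lemma hi_unshared u : ~ shared u -> hi u = lo u.
Proof.
  move=> su; rewrite hi_lo (proj2 (countp_eq0 _ _)) ?addn0 // => w hw e.
  by apply: su; rewrite /shared -e.
Qed.

Lemma hi_le_size u : (hi u <= size W)%nat.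
Proof. exact: count_size. Qed.

Lemma nonadj_dom_between u v : dom_class u -> dom_class v -> lt_dom (p u) (p v) ->
  nonadj u v <-> forall w, In w W -> ~ (lt_dom w (p v) /\ ~ (w = p u \/ lt_dom w (p u))).
Proof.
  move=> cu cv l; split=> h w hw.
  - case=> wv nu; case/(beyond_dom w l): (h w hw) => [e|[e|[wu|vw]]].
    + by apply: nu; left.
    + by rewrite e in wv; apply: lt_dom_irrefl wv.
    + by apply: nu; right.
    + exact: lt_dom_asym vw wv.
  - apply/(beyond_dom w l); case: (cu w hw) => [e|[wu|uw]]; [by left | by right; right; left |].
    case: (cv w hw) => [e|[wv|vw]]; [by right; left | | by right; right; right].
    case: (h w hw); split=> // -[e|wu]; last exact: lt_dom_asym uw wu.
    by rewrite e in uw; apply: lt_dom_irrefl uw.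
Qed.

Lemma levels_dom u v : dom_class u -> dom_class v -> lt_dom (p u) (p v) ->
  (hi u <= lo v)%nat /\ (nonadj u v <-> hi u = lo v).
Proof.
  move=> cu cv l.
  have -> : lo v = (hi u + countp W (fun w => lt_dom w (p v) /\ ~ (w = p u \/ lt_dom w (p u))))%nat.
    by apply: countp_split => w _ [->|wu] //; apply: lt_dom_trans wu l.
  split; first exact: leq_addr.
  rewrite (nonadj_dom_between cu cv l) -countp_eq0; lia.
Qed.

Lemma nonadj_dom_class u v : nonadj u v -> lt_dom (p u) (p v) -> dom_class u /\ dom_class v.
Proof.
  move=> h l; split=> w /h /(beyond_dom w l) [->|[->|[wu|vw]]]; rewrite /dom_comparable.
  all: try by [left | right; left | right; right].
  - by right; right; apply: lt_dom_trans l vw.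
  - by right; left; apply: lt_dom_trans wu l.
Qed.

Lemma nonadj_anti_class u v : nonadj u v -> lt_anti (p u) (p v) -> anti_class u /\ anti_class v.
Proof.
  move=> h l; split=> w /h /(beyond_anti w l) [->|[->|[wu|vw]]]; rewrite /anti_comparable.
  all: try by [left | right; left | right; right].
  - by right; right; apply: lt_anti_trans l vw.
  - by right; left; apply: lt_anti_trans wu l.
Qed.

Lemma nonadj_classes u v : u <> v -> nonadj u v ->
  (dom_class u /\ dom_class v) \/ (anti_class u /\ anti_class v).
Proof.
  move=> nuv h; case: (orientation (apart_p nuv)) => [l|[l|[l|l]]].
  - by left; apply: nonadj_dom_class h l.
  - by left; case: (nonadj_dom_class (nonadj_sym h) l).
  - by right; apply: nonadj_anti_class h l.
  - by right; case: (nonadj_anti_class (nonadj_sym h) l).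
Qed.

Lemma nonadj_of_both u v : dom_class u -> anti_class u -> nonadj u v.
Proof.
  move=> cu au w hw; left.
  case: (cu w hw) => [//|cmp]; case: (au w hw) => [//|acmp].
  by case: cmp => /lt_dom_not_anti; case; [|apply: anti_comparable_sym].
Qed.

Lemma shared_dom_comparable t u : shared t -> dom_class u -> t <> u -> dom_comparable (p t) (p u).
Proof.
  move=> st cu ntu; case: (cu _ st) => [e|//].
  by have [h _] := apart_p ntu; case: h; rewrite e.
Qed.

Definition place (u : T) : pt := if asbool (shared u) then hinge (lo u) else box (lo u) (sq (p u)).

Lemma place_bounds u : 0 <= fst (place u) <= 3 * INR (size W) + 1 /\
  - (3 * INR (size W)) <= snd (place u) <= 1.
Proof.
  have hs := hi_le_size u; have := pos_INR (lo u); case: (in_unit_sq (p u)) => /= ? ?.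
  rewrite /place; case: asboolP => su.
  - rewrite hi_shared // in hs; have := INR_ltn hs; rewrite /hinge; case: odd => /= *; lra.
  - rewrite hi_unshared // in hs; have := le_INR _ _ (elimT leP hs); rewrite /box /= => *; lra.
Qed.

Lemma place_dom u v : dom_class u -> dom_class v -> lt_dom (p u) (p v) ->
  encodes (nonadj u v) (place u) (place v).
Proof.
  move=> cu cv l; have [le_uv eN] := levels_dom cu cv l.
  rewrite /place; case: asboolP => su; case: asboolP => sv;
    rewrite ?(hi_shared su) ?(hi_unshared su) in le_uv eN.
  - by have [e g] := hinge_hinge le_uv; split=> //; rewrite eN -e; lia.
  - by have [e g] := hinge_box (lo u) (lo v) (in_unit_sq (p v)); split=> //; rewrite eN -e; lia.
  - by apply: (encodes_sym _ (hinge_box (lo v) (lo u) (in_unit_sq (p u)))); rewrite eN; lia.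
  - have nuv : u <> v by move=> e; rewrite e in l; apply: lt_dom_irrefl l.
    have [e g] := box_box (i := lo u) (j := lo v) (in_unit_sq (p u)) (in_unit_sq (p v))
      (or_intror (apart_sq (apart_p nuv))).
    split=> //; rewrite eN -e /dom_comparable lt_dom_sq; tauto.
Qed.

Lemma place_anti u v : dom_class u -> dom_class v -> ~ anti_class u -> lt_anti (p u) (p v) ->
  encodes (nonadj u v) (place u) (place v).
Proof.
  move=> cu cv au l.
  have nuv : u <> v by move=> e; rewrite e in l; apply: lt_anti_irrefl l.
  have su : ~ shared u.
    by move/shared_dom_comparable/(_ cv nuv) => -[]/lt_dom_not_anti; case; [left | right].
  have sv : ~ shared v.
    by move/shared_dom_comparable/(_ cu (nesym nuv)) => -[]/lt_dom_not_anti; case; [right | left].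
  have nN : ~ nonadj u v by move/nonadj_anti_class/(_ l) => -[].
  have [e g] := box_box (i := lo u) (j := lo v) (in_unit_sq (p u)) (in_unit_sq (p v))
    (or_intror (apart_sq (apart_p nuv))).
  rewrite /place; do 2 case: asboolP => // _; split=> //; rewrite -e /dom_comparable !lt_dom_sq.
  by split=> // -[_ [/lt_dom_not_anti|/lt_dom_not_anti]]; case; [left | right].
Qed.

Lemma place_correct u v : u <> v -> dom_class u -> ~ anti_class u ->
  dom_class v -> ~ anti_class v -> encodes (nonadj u v) (place u) (place v).
Proof.
  move=> nuv cu au cv av; case: (orientation (apart_p nuv)) => [l|[l|[l|l]]].
  - exact: place_dom.
  - by apply: (encodes_sym _ (place_dom cv cu l)); split; apply: nonadj_sym.
  - exact: place_anti.
  - by apply: (encodes_sym _ (place_anti cv cu av l)); split; apply: nonadj_sym.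
Qed.
End Levels.

Definition rho (a : pt) : pt := (fst a, - snd a).

Lemma rhoK : involutive rho.
Proof. by case=> a b; rewrite /rho /= Ropp_involutive. Qed.

Lemma rho_eq a b : rho a = rho b <-> a = b.
Proof. by split=> [/(can_inj rhoK)|->]. Qed.

Lemma lt_dom_rho a b : lt_dom (rho a) (rho b) <-> lt_anti a b.
Proof. rewrite /lt_dom /lt_anti /rho /=; lra. Qed.

Lemma lt_anti_rho a b : lt_anti (rho a) (rho b) <-> lt_dom a b.
Proof. rewrite /lt_dom /lt_anti /rho /=; lra. Qed.

Lemma apart_rho a b : apart (rho a) (rho b) <-> apart a b.
Proof. by rewrite /apart /rho /=; split=> -[h1 h2]; split=> // e; apply: h2; lra. Qed.

Lemma beyond_rho w x y : beyond (rho w) (rho x) (rho y) <-> beyond w x y.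
Proof. by rewrite /beyond /outside !rho_eq !lt_dom_rho !lt_anti_rho; tauto. Qed.

Lemma all_map_rho (P Q : pt -> Prop) (W : list pt) : (forall w, P (rho w) <-> Q w) ->
  (forall w, In w (List.map rho W) -> P w) <-> (forall w, In w W -> Q w).
Proof.
  move=> e; split=> h w hw.
  - exact/e/h/in_map.
  - by case/in_map_iff: hw => w' [<- hw']; apply/e/h.
Qed.

Lemma size_map_rho (W : list pt) : size (List.map rho W) = size W.
Proof. by elim: W => //= w W ->. Qed.

Section Reflection.
Variables (T : finType) (p : T -> pt) (W : list pt).

Lemma nonadj_rho u v : nonadj (rho \o p) (List.map rho W) u v <-> nonadj p W u v.
Proof. by apply: all_map_rho => w; apply: beyond_rho. Qed.

Lemma dom_class_rho u : dom_class (rho \o p) (List.map rho W) u <-> anti_class p W u.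
Proof.
  apply: all_map_rho => w /=.
  by rewrite rho_eq /dom_comparable /anti_comparable !lt_dom_rho.
Qed.

Lemma anti_class_rho u : anti_class (rho \o p) (List.map rho W) u <-> dom_class p W u.
Proof.
  apply: all_map_rho => w /=.
  by rewrite rho_eq /dom_comparable /anti_comparable !lt_anti_rho.
Qed.
End Reflection.

Definition slide (c : R) (a : pt) : pt := (fst a + c, snd a - c).

Lemma encodes_slide (N : Prop) c a b : encodes N a b -> encodes N (slide c a) (slide c b).
Proof.
  rewrite /encodes /dom_comparable /lt_dom /apart /slide /= => -[e [h1 h2]].
  by rewrite e; split; [lra | split=> ?; [apply: h1 | apply: h2]; lra].
Qed.

Lemma encodes_equiv (N N' : Prop) a b : (N <-> N') -> encodes N' a b -> encodes N a b.
Proof. by move=> e [h g]; split=> //; rewrite e. Qed.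

Inductive kind := Both | DomOnly | AntiOnly | Neither.

Section Embedding.
Variables (T : finType) (p : T -> pt) (W : list pt).
Hypothesis apart_p : forall u v, u <> v -> apart (p u) (p v).
Hypothesis uniq_W : NoDup W.

Definition kind_of (u : T) : kind :=
  match asbool (dom_class p W u), asbool (anti_class p W u) with
  | true, true => Both
  | true, false => DomOnly
  | false, true => AntiOnly
  | false, false => Neither
  end.

Variant kind_spec (u : T) : kind -> Prop :=
  | KindBoth of dom_class p W u & anti_class p W u : kind_spec u Both
  | KindDom of dom_class p W u & ~ anti_class p W u : kind_spec u DomOnly
  | KindAnti of ~ dom_class p W u & anti_class p W u : kind_spec u AntiOnly
  | KindNeither of ~ dom_class p W u & ~ anti_class p W u : kind_spec u Neither.

Lemma kindP u : kind_spec u (kind_of u).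
Proof. by rewrite /kind_of; do 2 case: asboolP => ?; constructor. Qed.

Let L := INR (size W).

Lemma uniq_map_rho : NoDup (List.map rho W).
Proof. by apply: FinFun.Injective_map_NoDup uniq_W; apply: can_inj rhoK. Qed.

(* [Both] vertices are nonadjacent to everything and go far below-left; the two placed
   kinds occupy two mutually incomparable boxes; [Neither] vertices go on a far
   anti-diagonal. *)
Definition embed (u : T) : pt :=
  let s := squash (fst (p u)) in
  match kind_of u with
  | Both => (s - 10, s - 6 * L - 30)
  | DomOnly => place p W u
  | AntiOnly => slide (3 * L + 5) (place (rho \o p) (List.map rho W) u)
  | Neither => (6 * L + 10 + s, - 6 * L - 10 - s)
  end.

Lemma embed_region u :
  match kind_of u with
  | Both => fst (embed u) = squash (fst (p u)) - 10 /\
            snd (embed u) = fst (embed u) - 6 * L - 20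
  | DomOnly => 0 <= fst (embed u) <= 3 * L + 1 /\ - (3 * L) <= snd (embed u) <= 1
  | AntiOnly => 3 * L + 5 <= fst (embed u) <= 6 * L + 6 /\
                - 6 * L - 5 <= snd (embed u) <= - 3 * L - 4
  | Neither => fst (embed u) = 6 * L + 10 + squash (fst (p u)) /\
               snd (embed u) = - fst (embed u)
  end.
Proof.
  have := squash_bounds (fst (p u)); have := place_bounds p uniq_W u.
  have := place_bounds (rho \o p) uniq_map_rho u; rewrite size_map_rho.
  rewrite /embed /slide; case: (kind_of u) => /=; rewrite -/L; lra.
Qed.

Definition placed_together (u v : T) : Prop :=
  kind_of u = kind_of v /\ (kind_of u = DomOnly \/ kind_of u = AntiOnly).

Lemma kind_Both u : kind_of u = Both -> dom_class p W u /\ anti_class p W u.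
Proof. by case: kindP. Qed.

Lemma kind_DomOnly u : kind_of u = DomOnly -> dom_class p W u /\ ~ anti_class p W u.
Proof. by case: kindP. Qed.

Lemma kind_AntiOnly u : kind_of u = AntiOnly -> ~ dom_class p W u /\ anti_class p W u.
Proof. by case: kindP. Qed.

Lemma nonadj_kinds u v : u <> v -> ~ placed_together u v ->
  nonadj p W u v <-> kind_of u = Both \/ kind_of v = Both.
Proof.
  rewrite /placed_together => nuv same; split.
  - case/(nonadj_classes apart_p nuv) => -[cu cv]; move: same;
    case: (kindP u) => // _; case: (kindP v) => //; tauto.
  - case=> /kind_Both [cu au]; first exact: nonadj_of_both.
    exact/nonadj_sym/nonadj_of_both.
Qed.

Lemma embed_kinds u v : u <> v -> ~ placed_together u v ->
  encodes (kind_of u = Both \/ kind_of v = Both) (embed u) (embed v).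
Proof.
  rewrite /placed_together => nuv same.
  have := squash_bounds (fst (p u)); have := squash_bounds (fst (p v)).
  have L_ge0 : 0 <= L by apply: pos_INR.
  have [slt|slt] : squash (fst (p u)) < squash (fst (p v)) \/
                   squash (fst (p v)) < squash (fst (p u)).
    have := squash_neq (proj1 (apart_p nuv)).
    by case: (Rtotal_order (squash (fst (p u))) (squash (fst (p v)))); tauto.
  all: move: same (embed_region u) (embed_region v); case: (kind_of u); case: (kind_of v).
  all: try by move=> same; exfalso; apply: same; split=> //; first [by left | by right].
  all: move=> _ /= ru rv ? ?; rewrite /encodes /dom_comparable /lt_dom /apart.
  all: split; [split; [case=> // _; first [left; split; lra | right; split; lra]
                     | move=> [[? ?]|[? ?]]; first [by left | by right | exfalso; lra]]
              | split=> ?; lra].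
Qed.

Lemma embed_correct u v : u <> v -> encodes (nonadj p W u v) (embed u) (embed v).
Proof.
  move=> nuv.
  have [[same [ek|ek]]|diff] := classic (placed_together u v).
  - have [cu au] := kind_DomOnly ek; have [cv av] := kind_DomOnly (etrans (esym same) ek).
    by rewrite /embed -same ek; apply: place_correct.
  - have [cu au] := kind_AntiOnly ek; have [cv av] := kind_AntiOnly (etrans (esym same) ek).
    rewrite /embed -same ek; apply/encodes_slide/(encodes_equiv (iff_sym (nonadj_rho p W u v))).
    apply: (place_correct _ uniq_map_rho nuv).
    + by move=> x y nxy; apply/apart_rho/apart_p.
    + exact/dom_class_rho.
    + by move/anti_class_rho.
    + exact/dom_class_rho.
    + by move/anti_class_rho.
  - exact: encodes_equiv (nonadj_kinds nuv diff) (embed_kinds nuv diff).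
Qed.
End Embedding.

Lemma dominates_comparable a b : apart a b ->
  dominates a b \/ dominates b a <-> dom_comparable a b.
Proof.
  move=> g; case: (orientation g);
  rewrite /dom_comparable /dominates /lt_dom /lt_anti /apart in g *; lra.
Qed.

Lemma not_dom_comparable_rho a b : apart a b ->
  ~ dom_comparable a b <-> dominates (rho a) (rho b) \/ dominates (rho b) (rho a).
Proof.
  move=> g; case: (orientation g);
  rewrite /dom_comparable /dominates /lt_dom /lt_anti /rho /apart /= in g *; lra.
Qed.

Lemma In_enum (T : finType) (u : T) : In u (enum T).
Proof.
  have : u \in enum T by rewrite mem_enum.
  by elim: (enum T) => //= a l IH; rewrite inE => /orP [/eqP ->|/IH]; [left | right].
Qed.

Definition pt_eq_dec (a b : pt) : {a = b} + {a <> b} := excluded_middle_informative (a = b).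

Theorem square_graph_permutation (T : finType) (G : rel T) f W :
  square_graph_rep G f W -> permutation_graph G.
Proof.
  case=> f_inj [gpos adj]; set W' := nodup pt_eq_dec W.
  have in_vertices u : In (f u) (List.map f (enum T) ++ W).
    exact/in_or_app/or_introl/in_map/In_enum.
  have apart_f u v : u <> v -> apart (f u) (f v).
    by move=> nuv; apply: gpos (in_vertices u) (in_vertices v) _ => /f_inj.
  have apart_W w u : In w W -> w = f u \/ apart w (f u).
    move=> hw; case: (classic (w = f u)) => [|nwu]; [by left | right].
    exact: gpos (in_or_app _ _ _ (or_intror hw)) (in_vertices u) nwu.
  exists (fun u => rho (embed f W' u)); split=> u v nuv;
    have [eN g] := embed_correct apart_f (NoDup_nodup pt_eq_dec W) nuv.
  - exact/apart_rho.
  - rewrite (adj u v nuv) (sq_adjE (apart_f u v nuv)) => [|w hw]; last by split; apply: apart_W.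
    rewrite -(not_dom_comparable_rho g) -eN /nonadj.
    split=> [[w hw nb] hN | nN]; first exact/nb/hN/nodup_In.
    apply: NNPP => nex; apply: nN => w /nodup_In hw.
    by apply: NNPP => nb; apply: nex; exists w.
Qed.

Lemma not_beyond_origin x y : fst x < 0 < snd x -> fst y < 0 < snd y -> apart x y ->
  ~ beyond (0, 0) x y <-> dom_comparable x y.
Proof.
  move=> hx hy g.
  have nx : (0, 0) <> x by move=> e; rewrite -e /= in hx; lra.
  have ny : (0, 0) <> y by move=> e; rewrite -e /= in hy; lra.
  have comm : beyond (0, 0) x y <-> beyond (0, 0) y x by split; apply: beyond_sym.
  case: (orientation g) => [l|[l|[l|l]]];
    [rewrite (beyond_dom _ l) | rewrite comm (beyond_dom _ l)
    | rewrite (beyond_anti _ l) | rewrite comm (beyond_anti _ l)];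
    move: l hx hy; rewrite /dom_comparable /lt_dom /lt_anti /= => l hx hy.
  1,2: split=> [_|_ [e|[e|]]]; first [by left | by right | by apply: nx | by apply: ny | lra].
  all: split=> [nb|c]; [case: nb; right; right; right | exfalso]; lra.
Qed.

Theorem permutation_square_graph (T : finType) (G : rel T) :
  permutation_graph G -> exists f, square_graph_rep G f [:: (0, 0)].
Proof.
  case=> g [g_apart g_adj].
  pose f u := (fst (sq (g u)) - 1, snd (sq (g u))).
  have f_quadrant u : fst (f u) < 0 < snd (f u).
    by case: (in_unit_sq (g u)) => /= ? ?; rewrite /f /=; lra.
  have f_apart u v : u <> v -> apart (f u) (f v).
    move=> nuv; have [/= h1 h2] := apart_sq (g_apart u v nuv).
    by split=> /= e; [apply: h1 | apply: h2]; lra.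
  have f_dom u v : lt_dom (f u) (f v) <-> lt_dom (g u) (g v).
    have := squash_lt_iff (fst (g u)) (fst (g v)).
    have := squash_lt_iff (snd (g u)) (snd (g v)).
    rewrite /f /lt_dom /=; lra.
  exists f; split; [|split].
  - move=> u v e; apply: NNPP => nuv.
    by have [h _] := f_apart u v nuv; apply: h; rewrite e.
  - move=> a b ha hb.
    case: (in_app_or _ _ _ ha) => [/in_map_iff [u [<- _]]|[<-|[]]];
      case: (in_app_or _ _ _ hb) => [/in_map_iff [v [<- _]]|[<-|[]]].
    + by move=> nuv; apply: f_apart => e; rewrite e in nuv.
    + by move=> _; move: (f_quadrant u) => /= ?; split=> ?; lra.
    + by move=> _; move: (f_quadrant v) => /= ?; split=> ?; lra.
    + by [].
  - move=> u v nuv; rewrite (g_adj u v nuv) (dominates_comparable (g_apart u v nuv)).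
    rewrite (sq_adjE (f_apart u v nuv)) => [|w [<-|//]]; last first.
      by move: (f_quadrant u) (f_quadrant v) => /= ? ?; split; right; split=> /= ?; lra.
    rewrite /dom_comparable -!f_dom -/(dom_comparable (f u) (f v)).
    rewrite -(not_beyond_origin (f_quadrant u) (f_quadrant v) (f_apart u v nuv)).
    by split=> [nb|[w [<-|//]]] //; exists (0, 0); [left|].
Qed.

Unset Implicit Arguments.

Theorem mainTheorem10 (T : finType) (G : rel T)
  (Gsym : symmetric G) (Girr : irreflexive G) :
  ((exists (f : T -> pt) (W : list pt), square_graph_rep G f W) <-> permutation_graph G) /\
  (forall (f : T -> pt) (W : list pt), square_graph_rep G f W ->
     exists (f' : T -> pt) (W' : list pt),
       square_graph_rep G f' W' /\ (List.length W' <= 1)%nat).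
Proof.
  split; first split.
  - by case=> f [W] /square_graph_permutation.
  - by case/permutation_square_graph => f hf; exists f, [:: (0, 0)].
  - move=> f W /square_graph_permutation /permutation_square_graph [f' hf'].
    by exists f', [:: (0, 0)].
Qed.
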